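(* Let $k \geq 0$ be an integer and let $t$ be an indeterminate. Define polynomials $A^{k,\ell}(t)$ for integers $\ell \geq 0$ by $A^{k,0}(t) = 1$ and, for $\ell \geq 1$, $$A^{k,\ell}(t) = (1-t^{k+\ell})\, A^{k,\ell-1}(t) + t^{\ell(k+1)} \begin{bmatrix} k+\ell \\ \ell \end{bmatrix}_t .$$ Then for every $\ell \geq 0$, $$A^{k,\ell}(t) = 1 + \sum_{i=1}^{\ell} t^{i(k+\ell+1)} \begin{bmatrix} k \\ i \end{bmatrix}_t \sum_{j=0}^{\ell-i} t^{j(k-i+1)} \begin{bmatrix} i+j-1 \\ j \end{bmatrix}_t .$$
   Context: For integers $a,b$, the $t$-binomial coefficient is $\begin{bmatrix} a \\ b \end{bmatrix}_t = \frac{(t;t)_a}{(t;t)_b (t;t)_{a-b}}$ when $0 \le b \le a$ and $0$ otherwise, where $(x;t)_n = (1-x)(1-xt)(1-xt^2)\cdots(1-xt^{n-1})$ and $(x;t)_0=1$. *)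

(* The indeterminate t is 'X in the field of rational
   functions {fraction {poly int}}; t-binomials are defined literally as
   quotients of t-Pochhammer symbols in that field. *)
From HB Require Import structures.
From mathcomp Require Import all_boot all_order all_algebra fraction.
Set Implicit Arguments. Unset Strict Implicit. Unset Printing Implicit Defensive.
Import Order.TTheory GRing.Theory Num.Theory.
Local Open Scope ring_scope.

Definition ratfun : fieldType := {fraction {poly int}}.

Definition tvar : ratfun := tofrac ('X : {poly int}).

Definition tpoch (x : ratfun) (n : nat) : ratfun :=
  \prod_(i < n) (1 - x * tvar ^+ i).

Definition tbinom (a b : nat) : ratfun :=
  if (b <= a)%N then tpoch tvar a / (tpoch tvar b * tpoch tvar (a - b))
  else 0.

Fixpoint Akl (k l : nat) : ratfun :=
  match l with
  | 0 => 1
  | l'.+1 => (1 - tvar ^+ (k + l)) * Akl k l'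
             + tvar ^+ (l * (k + 1)) * tbinom (k + l) l
  end.

(* Write T_i(x, m) = \sum_(j <= m) [i+j-1, j]_t x^j for the degree-m truncation
   of 1/(x;t)_i and F_l(s) = \sum_(i <= l) t^(i s) [k, i]_t T_i(t^(k-i+1), l-i), so
   that the claim reads A^{k,l} = F_l(k+l+1).  Passing from l to l+1 adds one
   antidiagonal of the double sum, while passing from s to s+1 is governed by
   (1 - x) T_(i+1)(x, m) = T_i(t x, m) - x^(m+1) [i+m, m]_t together with
   [k, i+1]_t (1 - t^(i+1)) = [k, i]_t (1 - t^(k-i)).  With the t-Pascal rule this gives
     F_(l+1)(s+1) = (1 - t^s) F_l(s)
                    + \sum_i t^((i+1)s + (k-i)(l-i)) [l, l-i]_t [k+1, i+1]_t,
   and at s = k+l+1 the t-Vandermonde identity sums the last term to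
   t^((l+1)(k+1)) [k+l+1, l+1]_t, which is the recurrence defining A^{k,l}. *)

From HB Require Import structures.
From mathcomp Require Import all_boot all_order all_algebra fraction.
From mathcomp Require Import ring zify.
Set Implicit Arguments.
Unset Strict Implicit.
Unset Printing Implicit Defensive.
Import GRing.Theory.
Local Open Scope ring_scope.

Definition tfact (n : nat) : ratfun := tpoch tvar n.

Lemma tfact0 : tfact 0 = 1.
Proof. by rewrite /tfact /tpoch big_ord0. Qed.

Lemma tfactS n : tfact n.+1 = tfact n * (1 - tvar ^+ n.+1).
Proof. by rewrite /tfact /tpoch big_ord_recr /= exprS. Qed.

Lemma one_sub_tvarXS_neq0 n : 1 - tvar ^+ n.+1 != 0.
Proof.
rewrite -tofracXn -tofrac1 -tofracB tofrac_eq0 subr_eq0 eq_sym; apply/eqP.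
by move/(congr1 (fun p : {poly int} => size p)); rewrite size_polyXn size_poly1.
Qed.

Lemma tfact_neq0 n : tfact n != 0.
Proof.
elim: n => [|n IHn]; first by rewrite tfact0 oner_neq0.
by rewrite tfactS mulf_neq0 ?one_sub_tvarXS_neq0.
Qed.

Lemma tbinom_small a b : (a < b)%N -> tbinom a b = 0.
Proof. by rewrite /tbinom => /ltn_geF ->. Qed.

Lemma tbinom_tfact a b :
  (b <= a)%N -> tbinom a b * (tfact b * tfact (a - b)) = tfact a.
Proof. by rewrite /tbinom => ->; rewrite divfK ?mulf_neq0 ?tfact_neq0. Qed.

Lemma tbinom0 n : tbinom n 0 = 1.
Proof.
by rewrite /tbinom leq0n subn0 -/(tfact n) -/(tfact 0) tfact0 mul1r divff ?tfact_neq0.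
Qed.

Lemma mul_tbinom_left n b :
  tbinom n b.+1 * (1 - tvar ^+ b.+1) = tbinom n b * (1 - tvar ^+ (n - b)).
Proof.
case: (ltngtP b n) => [lt_bn | lt_nb | ->]; last first.
- by rewrite tbinom_small // subnn subrr !mul0r mulr0.
- by rewrite !tbinom_small ?mul0r // ltnW.
rewrite -(subnSK lt_bn); set c := (n - b.+1)%N.
apply: (mulIf (mulf_neq0 (tfact_neq0 b) (tfact_neq0 c))).
transitivity (tfact n).
  by rewrite -(tbinom_tfact lt_bn) tfactS; ring.
by rewrite -(tbinom_tfact (ltnW lt_bn)) -(subnSK lt_bn) tfactS; ring.
Qed.

Lemma mul_tbinom_diag n b :
  tbinom n.+1 b.+1 * (1 - tvar ^+ b.+1) = (1 - tvar ^+ n.+1) * tbinom n b.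
Proof.
case: (leqP b n) => [le_bn | lt_nb]; last by rewrite !tbinom_small ?mul0r ?mulr0.
apply: (mulIf (mulf_neq0 (tfact_neq0 b) (tfact_neq0 (n - b)))).
transitivity (tfact n.+1).
  by rewrite -(tbinom_tfact (le_bn : b.+1 <= n.+1)%N) subSS tfactS; ring.
by rewrite tfactS -(tbinom_tfact le_bn); ring.
Qed.

Lemma tbinomS n b : tbinom n.+1 b.+1 = tbinom n b + tvar ^+ b.+1 * tbinom n b.+1.
Proof.
apply: (mulIf (one_sub_tvarXS_neq0 b)); rewrite mul_tbinom_diag [RHS]mulrDl.
rewrite -mulrA mul_tbinom_left.
case: (leqP b n) => [le_bn | lt_nb].
  by rewrite -[in tvar ^+ n.+1](subnKC le_bn) -addSn exprD; ring.
by rewrite tbinom_small // !(mulr0, mul0r) addr0.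
Qed.

Lemma tbinomS' n b : tbinom n.+1 b.+1 = tbinom n b.+1 + tvar ^+ (n - b) * tbinom n b.
Proof.
apply: (mulIf (one_sub_tvarXS_neq0 b)); rewrite mul_tbinom_diag [RHS]mulrDl.
rewrite mul_tbinom_left.
case: (leqP b n) => [le_bn | lt_nb].
  by rewrite -[in tvar ^+ n.+1](subnKC le_bn) -addSn addnC exprD; ring.
by rewrite tbinom_small // !(mulr0, mul0r) addr0.
Qed.

Lemma tbinom_vandermonde m n r :
  \sum_(0 <= i < r.+1) tbinom m i * tbinom n (r - i) * tvar ^+ ((m - i) * (r - i))
  = tbinom (m + n) r.
Proof.
elim: m r => [|m IHm] r.
  rewrite big_nat_recl // big1_seq => [|i _]; last by rewrite tbinom_small // !mul0r.
  by rewrite tbinom0 !subn0 mul1r mul0n expr0 mulr1 addr0.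
case: r => [|r]; first by rewrite big_nat1 !subn0 muln0 expr0 !tbinom0 !mulr1.
have shifted :
    \sum_(0 <= i < r.+1)
      tvar ^+ i.+1 * tbinom m i.+1 * tbinom n (r - i) * tvar ^+ ((m - i) * (r - i))
    = tvar ^+ r.+1 * \sum_(0 <= i < r.+1)
      tbinom m i.+1 * tbinom n (r.+1 - i.+1) * tvar ^+ ((m - i.+1) * (r.+1 - i.+1)).
  rewrite mulr_sumr; apply: eq_big_nat => i /andP[_ le_ir].
  case: (ltnP i m) => [lt_im | le_mi]; last first.
    by rewrite tbinom_small ?ltnS // !(mulr0, mul0r).
  have weights : (i.+1 + (m - i) * (r - i) = r.+1 + (m - i.+1) * (r - i))%N.
    by nia.
  rewrite subSS; transitivity
    (tvar ^+ (i.+1 + (m - i) * (r - i)) * (tbinom m i.+1 * tbinom n (r - i))).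
    by rewrite exprD; ring.
  by rewrite weights exprD; ring.
rewrite big_nat_recl // addSn tbinomS -(IHm r) -(IHm r.+1).
rewrite [X in tvar ^+ r.+1 * X]big_nat_recl // mulrDr -shifted.
under eq_big_nat => i _ do rewrite !subSS tbinomS !mulrDl.
by rewrite big_split /= !tbinom0 !subn0 mulSn exprD; ring.
Qed.

(* The degree-m truncation of the series 1/(x;t)_i = \sum_j [i+j-1, j]_t x^j. *)
Definition inv_tpoch_trunc (i : nat) (x : ratfun) (m : nat) : ratfun :=
  \sum_(0 <= j < m.+1) x ^+ j * tbinom (i + j - 1) j.

Lemma inv_tpoch_trunc0 i x : inv_tpoch_trunc i x 0 = 1.
Proof. by rewrite /inv_tpoch_trunc big_nat1 expr0 mul1r addn0 tbinom0. Qed.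

Lemma inv_tpoch_truncS i x m :
  inv_tpoch_trunc i x m.+1 = inv_tpoch_trunc i x m + x ^+ m.+1 * tbinom (i + m) m.+1.
Proof. by rewrite /inv_tpoch_trunc big_nat_recr //= addnS subn1. Qed.

(* Truncation of (1 - x) / (x;t)_(i+1) = 1 / (t x;t)_i. *)
Lemma mul_inv_tpoch_trunc i x m :
  (1 - x) * inv_tpoch_trunc i.+1 x m
  = inv_tpoch_trunc i (tvar * x) m - x ^+ m.+1 * tbinom (i + m) m.
Proof.
elim: m => [|m IHm]; first by rewrite !inv_tpoch_trunc0 addn0 tbinom0 mulr1 expr1 mulr1.
rewrite !inv_tpoch_truncS mulrDr IHm addSn addnS tbinomS exprMn !exprS; ring.
Qed.

Section Asum.

Variable k : nat.

Definition Aterm (i m : nat) : ratfun :=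
  tbinom k i * inv_tpoch_trunc i (tvar ^+ (k - i + 1)) m.

(* [Asum l s] is F_l(s); the right-hand side of the theorem is [Asum l (k + l + 1)]. *)
Definition Asum (l s : nat) : ratfun :=
  \sum_(0 <= i < l.+1) tvar ^+ (i * s) * Aterm i (l - i).

Lemma Aterm0 m : Aterm 0 m = 1.
Proof.
rewrite /Aterm /inv_tpoch_trunc tbinom0 mul1r big_nat_recl // big1_seq => [|j _].
  by rewrite expr0 mul1r tbinom0 addr0.
by rewrite add0n subn1 tbinom_small // mulr0.
Qed.

(* For [k <= i] both sides vanish, which is why [t^(k-i)] may replace
   [t^(k-(i+1)+1)] despite truncated subtraction. *)
Lemma Aterm_succ i m :
  Aterm i.+1 m = tbinom k i.+1 * inv_tpoch_trunc i.+1 (tvar ^+ (k - i)) m.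
Proof.
rewrite /Aterm; case: (ltnP i k) => [lt_ik | le_ki]; first by rewrite addn1 subnSK.
by rewrite tbinom_small ?ltnS // !mul0r.
Qed.

Lemma mul_Aterm_succ i m :
  (1 - tvar ^+ i.+1) * Aterm i.+1 m
  = Aterm i m - tbinom k i * (tvar ^+ (k - i)) ^+ m.+1 * tbinom (i + m) m.
Proof.
rewrite Aterm_succ mulrA [(1 - _) * _]mulrC mul_tbinom_left -[LHS]mulrA.
by rewrite mul_inv_tpoch_trunc /Aterm addn1 -exprS; ring.
Qed.

Lemma Aterm_succS i m :
  Aterm i.+1 m.+1
  = Aterm i.+1 m + tbinom k i.+1 * (tvar ^+ (k - i)) ^+ m.+1 * tbinom (i + m).+1 m.+1.
Proof. by rewrite !Aterm_succ inv_tpoch_truncS addSn; ring. Qed.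

Lemma Asum_shift l s :
  Asum l.+1 s - Asum l.+1 s.+1 = tvar ^+ s * Asum l s -
    \sum_(0 <= i < l.+1)
      tvar ^+ (i.+1 * s) *
        (tbinom k i * (tvar ^+ (k - i)) ^+ (l - i).+1 * tbinom l (l - i)).
Proof.
rewrite /Asum -sumrB big_nat_recl // !mul0n subrr add0r mulr_sumr -sumrB.
apply: eq_big_nat => i /andP[_ le_il].
have := mul_Aterm_succ i (l - i); rewrite subnKC // => shift.
rewrite subSS mulnSr mulSn !exprD.
transitivity (tvar ^+ s * tvar ^+ (i * s) * ((1 - tvar ^+ i.+1) * Aterm i.+1 (l - i))).
  by ring.
by rewrite shift; ring.
Qed.

Lemma Asum_grow l s :
  Asum l.+1 s = Asum l s +
    \sum_(0 <= i < l.+1)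
      tvar ^+ (i.+1 * s) *
        (tbinom k i.+1 * (tvar ^+ (k - i)) ^+ (l - i) * tbinom l (l - i)).
Proof.
rewrite /Asum big_nat_recl // [in X in _ = X + _]big_nat_recl // -!addrA.
congr (_ + _); first by rewrite !Aterm0.
rewrite big_nat_recr //= [in X in _ = _ + X]big_nat_recr //= addrA -big_split /=.
congr (_ + _); last first.
  by rewrite !subnn Aterm_succ inv_tpoch_trunc0 expr0 tbinom0 !mulr1.
apply: eq_big_nat => i /andP[_ lt_il].
rewrite subSS -(subnSK lt_il) Aterm_succS -addnS subnSK //.
by rewrite (subnKC (ltnW lt_il)) mulrDr.
Qed.

Lemma Asum_step l s :
  Asum l.+1 s.+1 = (1 - tvar ^+ s) * Asum l s +
    \sum_(0 <= i < l.+1) tvar ^+ (i.+1 * s) *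
      ((tvar ^+ (k - i)) ^+ (l - i) * tbinom l (l - i) * tbinom k.+1 i.+1).
Proof.
rewrite -(subKr (Asum l.+1 s) (Asum l.+1 s.+1)) Asum_shift Asum_grow opprB.
move: (Asum l s) => A.
rewrite [_ - tvar ^+ s * A]addrC addrACA mulrBl mul1r -big_split /=.
congr (_ + _); apply: eq_bigr => i _.
by rewrite tbinomS' exprS; ring.
Qed.

Lemma Asum_step_correction l :
  \sum_(0 <= i < l.+1) tvar ^+ (i.+1 * (k + l).+1) *
    ((tvar ^+ (k - i)) ^+ (l - i) * tbinom l (l - i) * tbinom k.+1 i.+1)
  = tvar ^+ (l.+1 * k.+1) * tbinom (k + l).+1 l.+1.
Proof.
have := tbinom_vandermonde l k.+1 l.+1.
rewrite big_nat_recr //= tbinom_small // !mul0r addr0 addnS addnC => <-.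
rewrite mulr_sumr [RHS]big_nat_rev; apply: eq_big_nat => i /andP[_ le_il] /=.
rewrite subSS subSn ?leq_subr // subKn //.
case: (leqP i k) => [le_ik | lt_ki]; last first.
  by rewrite (@tbinom_small k.+1 i.+1 lt_ki) !(mulr0, mul0r).
have weights : (i.+1 * (k + l).+1 + (k - i) * (l - i) = l.+1 * k.+1 + i * i.+1)%N.
  by nia.
transitivity (tvar ^+ (i.+1 * (k + l).+1 + (k - i) * (l - i))
              * (tbinom l (l - i) * tbinom k.+1 i.+1)).
  by rewrite exprD !exprM; ring.
by rewrite weights exprD; ring.
Qed.

Lemma Akl_Asum l : Akl k l = Asum l (k + l).+1.
Proof.
elim: l => [|l IHl]; first by rewrite /Asum big_nat1 Aterm0 mulr1.
by rewrite /= IHl addn1 !addnS Asum_step Asum_step_correction.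
Qed.

End Asum.

Theorem lemma2 (k l : nat) :
  Akl k l =
  1 + \sum_(1 <= i < l.+1)
        tvar ^+ (i * (k + l + 1)) * tbinom k i *
        \sum_(0 <= j < (l - i).+1)
          tvar ^+ (j * (k - i + 1)) * tbinom (i + j - 1) j.
Proof.
rewrite Akl_Asum /Asum big_ltn // mul0n expr0 Aterm0 mulr1 addn1; congr (_ + _).
apply: eq_bigr => i _; rewrite /Aterm /inv_tpoch_trunc -mulrA; congr (_ * (_ * _)).
by apply: eq_bigr => j _; rewrite -exprM mulnC.
Qed.
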